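(* Let $A,B\in\mathcal{B}$ have nonzero diameters, and let $\varepsilon>0$ satisfy $2\varepsilon<\min\{\operatorname{diam}A,\operatorname{diam}B\}$. Then no $\varepsilon$-shortest curve connecting $A$ and $B$ passes through $\Delta_1$.
   Context: All metric spaces (with finite-valued metrics) are considered up to isometry. $\mathcal{GH}$ denotes the class (in the sense of von Neumann–Bernays–Gödel set theory) of representatives of isometry classes of all metric spaces, and $\mathcal{B}\subset\mathcal{GH}$ the subclass of bounded metric spaces. $d_{GH}$ is the Gromov–Hausdorff distance, with values in $[0,\infty]$: $d_{GH}(X,Y)$ is the infimum of $r$ such that there exist a metric space $Z$ and subsets $X',Y'\subset Z$ isometric to $X,Y$ with Hausdorff distance $d_H(X',Y')\le r$. Topology on the class: for each cardinal $n$, the subclass $\mathcal{GH}_n$ of spaces of cardinality at most $n$ is a set, endowed with the topology whose base consists of the open balls of $d_{GH}$. A map $f$ from a topological space $Z$ to $\mathcal{GH}$ is continuous if it is continuous as a map into $\mathcal{GH}_n$ for some (equivalently, every) cardinal $n$ with $f(Z)\subset\mathcal{GH}_n$. A continuous curve is a continuous map from a segment $[a,b]$. The length $|\gamma|$ of a continuous curve $\gamma\colon[a,b]\to\mathcal{GH}$ is the supremum of $\sum_i d_{GH}(\gamma(t_i),\gamma(t_{i+1}))$ over all partitions $a=t_1<\dots<t_k=b$. An $\varepsilon$-shortest curve connecting $A$ and $B$ is a continuous curve $\gamma$ with $\gamma(a)=A$, $\gamma(b)=B$ and $|\gamma|\le d_{GH}(A,B)+\varepsilon$. $\Delta_1$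 is the single-point metric space. *)

From Stdlib Require Import Reals List Lra.
From Coquelicot Require Import Coquelicot.
Open Scope R_scope.

Record MetricSpace : Type := {
  carrier :> Type;
  dist : carrier -> carrier -> R;
  dist_eq0 : forall x y, dist x y = 0 <-> x = y;
  dist_sym : forall x y, dist x y = dist y x;
  dist_tri : forall x y z, dist x z <= dist x y + dist y z
}.
Arguments dist {m} x y.

Definition iso_emb (X Z : MetricSpace) (f : X -> Z) : Prop :=
  forall x y, dist (f x) (f y) = dist x y.

(* isometry (X and Y represent the same point of GH) *)
Definition isometric (X Y : MetricSpace) : Prop :=
  exists f : X -> Y, iso_emb X Y f /\ forall y, exists x, f x = y.

Definition ms_bounded (X : MetricSpace) : Prop :=
  exists C, forall x y : X, dist x y <= C.

Definition diam (X : MetricSpace) : Rbar :=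
  Lub_Rbar (fun r => exists x y : X, r = dist x y).

Definition hausdorff (Z : MetricSpace) (A B : Z -> Prop) : Rbar :=
  Glb_Rbar (fun r => 0 < r /\
    (forall a, A a -> exists b, B b /\ dist a b < r) /\
    (forall b, B b -> exists a, A a /\ dist b a < r)).

Definition dGH (X Y : MetricSpace) : Rbar :=
  Glb_Rbar (fun r => exists (Z : MetricSpace) (f : X -> Z) (g : Y -> Z),
    iso_emb X Z f /\ iso_emb Y Z g /\
    Rbar_le (hausdorff Z (fun z => exists x, f x = z) (fun z => exists y, g y = z))
            (Finite r)).

Definition Delta1 : MetricSpace.
Proof.
  refine {| carrier := unit; dist := fun _ _ => 0 |}.
  - intros [] []; split; auto.
  - auto.
  - intros; lra.
Defined.

Definition GH_continuous (a b : R) (gamma : R -> MetricSpace) : Prop :=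
  forall t, a <= t <= b -> forall eps, 0 < eps -> exists delta, 0 < delta /\
    forall s, a <= s <= b -> Rabs (s - t) < delta ->
      Rbar_lt (dGH (gamma s) (gamma t)) (Finite eps).

(* partitions a = t_1 < ... < t_k = b, given as a list [t_2; ...; t_k] *)
Fixpoint incr_chain (t : R) (l : list R) : Prop :=
  match l with nil => True | s :: l' => t < s /\ incr_chain s l' end.

Fixpoint chain_sum (gamma : R -> MetricSpace) (t : R) (l : list R) : Rbar :=
  match l with
  | nil => Finite 0
  | s :: l' => Rbar_plus (dGH (gamma t) (gamma s)) (chain_sum gamma s l')
  end.

Definition curve_length (a b : R) (gamma : R -> MetricSpace) : Rbar :=
  Rbar_lub (fun S => exists l, incr_chain a l /\ last l a = b /\ S = chain_sum gamma a l).

Definition eps_shortest (eps : R) (A B : MetricSpace) (a b : R)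
    (gamma : R -> MetricSpace) : Prop :=
  a <= b /\ GH_continuous a b gamma /\
  isometric (gamma a) A /\ isometric (gamma b) B /\
  Rbar_le (curve_length a b gamma) (Rbar_plus (dGH A B) (Finite eps)).

From Pilot Require Import Defs.
From Stdlib Require Import Reals Lra List Classical.
From Coquelicot Require Import Coquelicot.
Open Scope R_scope.
Import Pilot.Defs.

(* A space all of whose distances vanish is at Gromov-Hausdorff distance at
   least diam X / 2 from any X, since every point of X lies within the
   Hausdorff radius of the single image point.  Hence if gamma passed through
   Delta_1 at an interior time t, the two-step partition a < t < b would give
   |gamma| >= (diam A + diam B) / 2, while gluing A and B at mutual distance
   max(diam A, diam B) / 2 gives d_GH(A, B) <= max(diam A, diam B) / 2.  Then
   min(diam A, diam B) <= 2 eps, a contradiction.  At the endpoints gamma is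
   isometric to A or B, whose diameters are positive. *)

Lemma Glb_Rbar_ge (E : R -> Prop) (c : R) :
  (forall r, E r -> c <= r) -> Rbar_le c (Glb_Rbar E).
Proof. intro lbE. apply (proj2 (Glb_Rbar_correct E)). exact lbE. Qed.

Lemma Glb_Rbar_le (E : R -> Prop) (r : R) : E r -> Rbar_le (Glb_Rbar E) r.
Proof. apply (proj1 (Glb_Rbar_correct E)). Qed.

Lemma Glb_Rbar_lt_witness (E : R -> Prop) (r r' : R) :
  Rbar_le (Glb_Rbar E) r -> r < r' -> exists s, E s /\ s < r'.
Proof.
  intros glb_le lt_rr'. apply NNPP; intro noE.
  assert (ge_r' : Rbar_le r' (Glb_Rbar E)).
  { apply Glb_Rbar_ge; intros s Es. apply Rnot_lt_le; intro. apply noE; eauto. }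
  pose proof (Rbar_le_trans _ _ _ ge_r' glb_le). simpl in *. lra.
Qed.

Lemma Rbar_le_of_le_gt (G : Rbar) (x : R) :
  (forall r, x < r -> Rbar_le G r) -> Rbar_le G x.
Proof.
  intro leG. destruct G as [g | | ]; simpl; auto.
  - apply Rnot_lt_le; intro lt_xg.
    assert (g <= (x + g) / 2) by (apply (leG ((x + g) / 2)); lra). lra.
  - apply (leG (x + 1)); lra.
Qed.

Lemma dist_ge0 (X : MetricSpace) (x y : X) : 0 <= dist x y.
Proof.
  pose proof (dist_tri X x y x). pose proof (proj2 (dist_eq0 X x x) eq_refl).
  rewrite (dist_sym X y x) in *. lra.
Qed.

Lemma dist_le_diam (X : MetricSpace) (x y : X) : Rbar_le (dist x y) (diam X).
Proof. apply (proj1 (Lub_Rbar_correct _)). eauto. Qed.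

Lemma diam_le (X : MetricSpace) (c : R) :
  (forall x y : X, dist x y <= c) -> Rbar_le (diam X) c.
Proof.
  intro le_c. apply (proj2 (Lub_Rbar_correct _)). intros r [x [y ->]]. apply le_c.
Qed.

Lemma diam_gt_witness (X : MetricSpace) (c : R) :
  Rbar_lt c (diam X) -> exists x y : X, c < dist x y.
Proof.
  intro lt_c. apply NNPP; intro nodist.
  apply (Rbar_lt_not_le _ _ lt_c), diam_le; intros x y.
  apply Rnot_lt_le; intro. apply nodist; eauto.
Qed.

Lemma bounded_diam_finite (X : MetricSpace) (c : R) :
  ms_bounded X -> Rbar_lt c (diam X) -> exists d, diam X = Finite d.
Proof.
  intros [C bound] lt_c. pose proof (diam_le X C bound).
  destruct (diam X); simpl in *; eauto; contradiction.
Qed.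

Lemma isometric_diam (X Y : MetricSpace) : isometric X Y -> diam X = diam Y.
Proof.
  intros [f [isof ontof]]. apply Lub_Rbar_eqset; intro r; split.
  - intros [x [x' ->]]. exists (f x), (f x'). now rewrite isof.
  - intros [y [y' ->]]. destruct (ontof y) as [x <-], (ontof y') as [x' <-].
    exists x, x'. now rewrite isof.
Qed.

Lemma isometric_Delta1_dist (Y : MetricSpace) :
  isometric Y Delta1 -> forall y y' : Y, dist y y' = 0.
Proof. intros [f [isof _]] y y'. now rewrite <- isof. Qed.

Lemma not_isometric_Delta1_of_diam_gt0 (X Y : MetricSpace) :
  isometric X Y -> Rbar_lt 0 (diam Y) -> ~ isometric X Delta1.
Proof.
  intros isoXY diam_gt0 pt. rewrite <- (isometric_diam _ _ isoXY) in diam_gt0.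
  apply (Rbar_lt_not_le _ _ diam_gt0), diam_le; intros x y.
  rewrite (isometric_Delta1_dist _ pt). apply Rle_refl.
Qed.

Lemma hausdorff_sym (Z : MetricSpace) (S T : Z -> Prop) :
  hausdorff Z S T = hausdorff Z T S.
Proof. apply Glb_Rbar_eqset; intro r; tauto. Qed.

Lemma dGH_sym (X Y : MetricSpace) : dGH X Y = dGH Y X.
Proof.
  apply Glb_Rbar_eqset; intro r.
  split; intros [Z [f [g [isof [isog H]]]]]; exists Z, g, f;
    rewrite hausdorff_sym; auto.
Qed.

Lemma dGH_ge_half_diam_pointlike (X Y : MetricSpace) (d : R) :
  diam X = Finite d -> (forall y y' : Y, dist y y' = 0) ->
  Rbar_le (d / 2) (dGH X Y).
Proof.
  intros diamX Y0. apply Glb_Rbar_ge; intros r [Z [f [g [isof [isog hausZ]]]]].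
  assert (le_2r : Rbar_le (diam X) (2 * r)).
  { apply diam_le; intros x1 x2. apply Rnot_lt_le; intro lt_r.
    destruct (Glb_Rbar_lt_witness _ r (dist x1 x2 / 2) hausZ ltac:(lra))
      as [s [[_ [near_g _]] lt_s]].
    destruct (near_g (f x1) (ex_intro _ x1 eq_refl)) as [_ [[y1 <-] d1]].
    destruct (near_g (f x2) (ex_intro _ x2 eq_refl)) as [_ [[y2 <-] d2]].
    pose proof (dist_tri Z (f x1) (g y1) (f x2)).
    pose proof (dist_tri Z (g y1) (g y2) (f x2)).
    rewrite isof in *. rewrite isog, Y0, (dist_sym Z (g y2)) in *. lra. }
  rewrite diamX in le_2r. simpl in *. lra.
Qed.

Section Glue.

Variables (A B : MetricSpace) (C : R).
Hypothesis C_gt0 : 0 < C.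
Hypothesis A_le_C : forall x y : A, dist x y <= C.
Hypothesis B_le_C : forall x y : B, dist x y <= C.

Definition glue_dist (p q : A + B) : R :=
  match p, q with
  | inl a, inl a' => dist a a'
  | inr b, inr b' => dist b b'
  | _, _ => C / 2
  end.

Definition glue : MetricSpace.
Proof.
  refine {| carrier := (A + B)%type; dist := glue_dist |}.
  - intros [x | x] [y | y]; simpl;
      try (split; intro H; [lra | discriminate]);
      (rewrite dist_eq0; split; intro H; [now subst | now inversion H]).
  - intros [x | x] [y | y]; simpl; auto using dist_sym.
  - intros [x | x] [y | y] [z | z]; simpl; try apply dist_tri;
      try pose proof (dist_ge0 _ x y); try pose proof (dist_ge0 _ y z);
      try pose proof (A_le_C x z); try pose proof (B_le_C x z); lra.
Defined.

Lemma dGH_le_half_bound (a0 : A) (b0 : B) : Rbar_le (dGH A B) (C / 2).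
Proof.
  apply Rbar_le_of_le_gt; intros r lt_r. apply Glb_Rbar_le.
  exists glue, inl, inr. split; [easy |]. split; [easy |].
  apply Glb_Rbar_le. split; [lra |]. split; intros z [x <-].
  - exists (inr b0). split; [eauto | simpl; lra].
  - exists (inl a0). split; [eauto | simpl; lra].
Qed.

End Glue.

Lemma dGH_le_half_max_diam (A B : MetricSpace) (dA dB : R) (a0 : A) (b0 : B) :
  diam A = Finite dA -> diam B = Finite dB -> 0 < Rmax dA dB ->
  Rbar_le (dGH A B) (Rmax dA dB / 2).
Proof.
  intros EA EB max_gt0. refine (dGH_le_half_bound A B _ max_gt0 _ _ a0 b0);
    intros x y.
  - pose proof (dist_le_diam A x y) as H. rewrite EA in H.
    pose proof (Rmax_l dA dB). simpl in H. lra.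
  - pose proof (dist_le_diam B x y) as H. rewrite EB in H.
    pose proof (Rmax_r dA dB). simpl in H. lra.
Qed.

Lemma chain_sum_le_curve_length (a b : R) (gamma : R -> MetricSpace) (l : list R) :
  incr_chain a l -> last l a = b ->
  Rbar_le (chain_sum gamma a l) (curve_length a b gamma).
Proof. intros incr_l last_l. apply (proj1 (proj2_sig (Rbar_ex_lub _))). eauto. Qed.

Lemma curve_length_ge_split (a t b : R) (gamma : R -> MetricSpace) :
  a < t < b ->
  Rbar_le (Rbar_plus (dGH (gamma a) (gamma t)) (dGH (gamma t) (gamma b)))
          (curve_length a b gamma).
Proof.
  intro ltt. rewrite <- (Rbar_plus_0_r (dGH (gamma t) (gamma b))).
  apply (chain_sum_le_curve_length _ _ _ (t :: b :: nil)); simpl; tauto.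
Qed.

Theorem lemma5 (A B : MetricSpace) (eps : R) :
  ms_bounded A -> ms_bounded B ->
  diam A <> Finite 0 -> diam B <> Finite 0 ->
  0 < eps ->
  Rbar_lt (Finite (2 * eps)) (Rbar_min (diam A) (diam B)) ->
  forall (a b : R) (gamma : R -> MetricSpace),
    eps_shortest eps A B a b gamma ->
    forall t, a <= t <= b -> ~ isometric (gamma t) Delta1.
Proof.
  intros bA bB _ _ eps_gt0 lt_min a b gamma [_ [_ [isoA [isoB len_le]]]] t tab pt.
  pose proof (Rbar_lt_le_trans _ _ _ lt_min (Rbar_min_l _ _)) as diamA.
  pose proof (Rbar_lt_le_trans _ _ _ lt_min (Rbar_min_r _ _)) as diamB.
  destruct (bounded_diam_finite _ _ bA diamA) as [dA EA].
  destruct (bounded_diam_finite _ _ bB diamB) as [dB EB].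
  destruct (diam_gt_witness _ _ diamA) as [a0 _].
  destruct (diam_gt_witness _ _ diamB) as [b0 _].
  rewrite EA in diamA; rewrite EB in diamB; simpl in diamA, diamB.
  destruct (Req_dec t a) as [-> | neq_a].
  { revert pt. apply (not_isometric_Delta1_of_diam_gt0 _ _ isoA).
    rewrite EA; simpl; lra. }
  destruct (Req_dec t b) as [-> | neq_b].
  { revert pt. apply (not_isometric_Delta1_of_diam_gt0 _ _ isoB).
    rewrite EB; simpl; lra. }
  pose proof (isometric_Delta1_dist _ pt) as pt0.
  assert (le_dA : Rbar_le (dA / 2) (dGH (gamma a) (gamma t))).
  { apply dGH_ge_half_diam_pointlike; auto. now rewrite (isometric_diam _ _ isoA). }
  assert (le_dB : Rbar_le (dB / 2) (dGH (gamma t) (gamma b))).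
  { rewrite dGH_sym. apply dGH_ge_half_diam_pointlike; auto.
    now rewrite (isometric_diam _ _ isoB). }
  assert (max_gt0 : 0 < Rmax dA dB) by (pose proof (Rmax_l dA dB); lra).
  pose proof (dGH_le_half_max_diam A B dA dB a0 b0 EA EB max_gt0) as dGH_le.
  pose proof (curve_length_ge_split a t b gamma ltac:(lra)) as len_ge.
  assert (sum_le : Rbar_le (Rbar_plus (dA / 2) (dB / 2))
                           (Rbar_plus (Rmax dA dB / 2) eps)).
  { apply (Rbar_le_trans _ _ _ (Rbar_plus_le_compat _ _ _ _ le_dA le_dB)).
    apply (Rbar_le_trans _ _ _ len_ge), (Rbar_le_trans _ _ _ len_le).
    apply Rbar_plus_le_compat; [exact dGH_le | apply Rbar_le_refl]. }
  simpl in sum_le. revert sum_le. apply Rmax_case_strong; intros; lra.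
Qed.
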